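(* Let $a>b\geq c>d>0$ be real numbers and define $f:\mathbb{R}\to\mathbb{R}$ by $$f(x)=\frac{a^x-b^x}{c^x-d^x}\quad (x\neq 0),\qquad f(0)=\frac{\ln(a/b)}{\ln(c/d)}.$$ Then $f$ is strictly convex on $\mathbb{R}$.
   Context: The value $f(0)$ is the continuous extension of $\frac{a^x-b^x}{c^x-d^x}$ at $x=0$. *)

From Stdlib Require Import Reals Lra.
Open Scope R_scope.

Definition f_abcd (a b c d x : R) : R :=
  if Req_EM_T x 0 then ln (a / b) / ln (c / d)
  else (Rpower a x - Rpower b x) / (Rpower c x - Rpower d x).

Definition strictly_convex (g : R -> R) : Prop :=
  forall x y t : R, x < y -> 0 < t < 1 ->
    g (t * x + (1 - t) * y) < t * g x + (1 - t) * g y.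

(* Writing p = ln (a/b), q = ln (c/d), r = ln (b/c) and
     S(y) = (e^y - 1)/y,   T(y) = e^y / S(y) = y e^y / (e^y - 1)   (S(0) = T(0) = 1),
   one has f(x) = (p/q) e^(r x) S(p x) T(q x).  Here p, q > 0 and r >= 0.  Both S and
   T are positive, strictly increasing and convex: away from 0 this is a sign check on
   their first two derivatives, and across 0 convexity survives because the line
   1 + y/2 supports both graphs.  A product of positive, nondecreasing, convex functions
   is convex, since the product of two chords exceeds the chord of the products by
   t (1 - t) (F y - F x) (G y - G x) >= 0; when both factors are strictly increasing
   this gap is positive, which gives strict convexity. *)

From Stdlib Require Import Reals Lra Psatz.
From Coquelicot Require Import Coquelicot.
Open Scope R_scope.

Definition convex (F : R -> R) : Prop :=
  forall x y t : R, x < y -> 0 < t < 1 ->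
    F (t * x + (1 - t) * y) <= t * F x + (1 - t) * F y.

Lemma convex_of_supporting_lines (F : R -> R) :
  (forall z, exists m, forall y, F z + m * (y - z) <= F y) -> convex F.
Proof.
  intros Hsupp x y t _ Ht.
  destruct (Hsupp (t * x + (1 - t) * y)) as [m Hm].
  pose proof (Hm x); pose proof (Hm y).
  nra.
Qed.

Lemma convex_comp_scale (F : R -> R) (k : R) :
  0 < k -> convex F -> convex (fun x => F (k * x)).
Proof.
  intros Hk HF x y t Hxy Ht.
  replace (k * (t * x + (1 - t) * y)) with (t * (k * x) + (1 - t) * (k * y)) by ring.
  apply HF; nra.
Qed.

Lemma strict_increasing_comp_scale (F : R -> R) (k : R) :
  0 < k -> strict_increasing F -> strict_increasing (fun x => F (k * x)).
Proof. intros Hk HF x y Hxy; apply HF; nra. Qed.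

Lemma increasing_of_strict_increasing (F : R -> R) :
  strict_increasing F -> increasing F.
Proof.
  intros HF x y Hxy; destruct (Req_dec x y) as [->|Hne]; [lra|].
  left; apply HF; lra.
Qed.

Lemma exp_scale_increasing (r : R) : 0 <= r -> increasing (fun x => exp (r * x)).
Proof.
  intros Hr x y Hxy; destruct (Req_dec (r * x) (r * y)) as [->|Hne]; [lra|].
  left; apply exp_increasing; nra.
Qed.

Lemma exp_scale_convex (r : R) : convex (fun x => exp (r * x)).
Proof.
  apply convex_of_supporting_lines; intro z; exists (r * exp (r * z)); intro y.
  pose proof (exp_ineq1_le (r * (y - z))); pose proof (exp_pos (r * z)).
  replace (exp (r * y)) with (exp (r * z) * exp (r * (y - z)))
    by (rewrite <- exp_plus; f_equal; ring).
  nra.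
Qed.

Lemma mul_convex_chord_gap (F G : R -> R) (x y t : R) :
  0 < t < 1 -> 0 < F (t * x + (1 - t) * y) -> 0 < G (t * x + (1 - t) * y) ->
  F (t * x + (1 - t) * y) <= t * F x + (1 - t) * F y ->
  G (t * x + (1 - t) * y) <= t * G x + (1 - t) * G y ->
  F (t * x + (1 - t) * y) * G (t * x + (1 - t) * y) <=
    t * (F x * G x) + (1 - t) * (F y * G y)
    - t * (1 - t) * ((F y - F x) * (G y - G x)).
Proof.
  set (z := t * x + (1 - t) * y); intros Ht HFz HGz HF HG.
  apply Rle_trans with ((t * F x + (1 - t) * F y) * G z).
  - apply Rmult_le_compat_r; lra.
  - apply Rle_trans with ((t * F x + (1 - t) * F y) * (t * G x + (1 - t) * G y)).
    + apply Rmult_le_compat_l; lra.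
    + right; ring.
Qed.

Lemma convex_mul (F G : R -> R) :
  (forall x, 0 < F x) -> (forall x, 0 < G x) -> increasing F -> increasing G ->
  convex F -> convex G -> convex (fun x => F x * G x).
Proof.
  intros HF0 HG0 HFi HGi HFc HGc x y t Hxy Ht.
  pose proof (mul_convex_chord_gap F G x y t Ht (HF0 _) (HG0 _)
                (HFc x y t Hxy Ht) (HGc x y t Hxy Ht)).
  assert (0 <= (F y - F x) * (G y - G x)).
  { pose proof (HFi x y); pose proof (HGi x y); apply Rmult_le_pos; lra. }
  assert (0 <= t * (1 - t)) by nra.
  nra.
Qed.

Lemma strictly_convex_mul (F G : R -> R) :
  (forall x, 0 < F x) -> (forall x, 0 < G x) ->
  strict_increasing F -> strict_increasing G ->
  convex F -> convex G -> strictly_convex (fun x => F x * G x).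
Proof.
  intros HF0 HG0 HFi HGi HFc HGc x y t Hxy Ht.
  pose proof (mul_convex_chord_gap F G x y t Ht (HF0 _) (HG0 _)
                (HFc x y t Hxy Ht) (HGc x y t Hxy Ht)).
  assert (0 < (F y - F x) * (G y - G x)).
  { pose proof (HFi x y Hxy); pose proof (HGi x y Hxy); apply Rmult_lt_0_compat; lra. }
  assert (0 < t * (1 - t)) by nra.
  nra.
Qed.

Lemma strict_increasing_mul (F G : R -> R) :
  (forall x, 0 < F x) -> (forall x, 0 < G x) -> increasing F -> strict_increasing G ->
  strict_increasing (fun x => F x * G x).
Proof.
  intros HF0 HG0 HFi HGi x y Hxy.
  pose proof (HFi x y (Rlt_le _ _ Hxy)); pose proof (HGi x y Hxy).
  pose proof (HF0 y); pose proof (HG0 x).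
  nra.
Qed.

Lemma continuity_pt_of_is_derive (F : R -> R) (u l : R) :
  is_derive F u l -> continuity_pt F u.
Proof.
  intro H; apply continuity_pt_filterlim, (ex_derive_continuous F u).
  exists l; exact H.
Qed.

Lemma mvt_interior (F dF : R -> R) (x y : R) : x < y ->
  (forall u, x <= u <= y -> continuity_pt F u) ->
  (forall u, x < u < y -> is_derive F u (dF u)) ->
  exists c, x < c < y /\ F y - F x = dF c * (y - x).
Proof.
  intros Hxy Hcont Hder.
  pose (pr := fun c (Hc : x < c < y) =>
    exist (derivable_pt_lim F c) (dF c) (proj1 (is_derive_Reals F c _) (Hder c Hc))).
  destruct (MVT F id x y pr (fun c _ => derivable_pt_id c) Hxy Hcont
              (fun c _ => derivable_continuous_pt _ _ (derivable_pt_id c))) as [c [Hc E]].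
  exists c; split; [exact Hc|].
  rewrite derive_pt_id in E; simpl in E; unfold id in E; lra.
Qed.

Lemma le_of_derive_nonneg (F dF : R -> R) (x y : R) : x <= y ->
  (forall u, x <= u <= y -> continuity_pt F u) ->
  (forall u, x < u < y -> is_derive F u (dF u)) ->
  (forall u, x < u < y -> 0 <= dF u) -> F x <= F y.
Proof.
  intros Hxy Hcont Hder Hpos.
  destruct (Req_dec x y) as [<-|Hne]; [lra|].
  destruct (mvt_interior F dF x y) as [c [Hc E]]; auto; [lra|].
  pose proof (Hpos c Hc); nra.
Qed.

Lemma lt_of_derive_pos (F dF : R -> R) (x y : R) : x < y ->
  (forall u, x <= u <= y -> continuity_pt F u) ->
  (forall u, x < u < y -> is_derive F u (dF u)) ->
  (forall u, x < u < y -> 0 < dF u) -> F x < F y.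
Proof.
  intros Hxy Hcont Hder Hpos.
  destruct (mvt_interior F dF x y) as [c [Hc E]]; auto.
  pose proof (Hpos c Hc); nra.
Qed.

Lemma increasing_of_derive_nonneg (F dF : R -> R) :
  (forall u, is_derive F u (dF u)) -> (forall u, 0 <= dF u) -> increasing F.
Proof.
  intros Hder Hpos x y Hxy.
  apply (le_of_derive_nonneg F dF); auto.
  intros u _; exact (continuity_pt_of_is_derive F u _ (Hder u)).
Qed.

Section SmoothOffZero.

Variables F F0 dF ddF : R -> R.
Hypothesis F_continuity_0 : continuity_pt F 0.
Hypothesis F_off_0 : forall v, v <> 0 -> F v = F0 v.
Hypothesis F0_derive : forall v, v <> 0 -> is_derive F0 v (dF v).
Hypothesis dF_derive : forall v, v <> 0 -> is_derive dF v (ddF v).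

Lemma off_0_is_derive v : v <> 0 -> is_derive F v (dF v).
Proof.
  intro Hv; apply (is_derive_ext_loc F0); [|exact (F0_derive v Hv)].
  assert (Hr : 0 < Rabs v) by (apply Rabs_pos_lt; exact Hv).
  exists (mkposreal _ Hr); intros t Ht; symmetry; apply F_off_0; intros ->.
  change (Rabs (0 - v) < Rabs v) in Ht.
  rewrite Rminus_0_l, Rabs_Ropp in Ht; lra.
Qed.

Lemma off_0_continuity u : continuity_pt F u.
Proof.
  destruct (Req_dec u 0) as [->|Hu]; [exact F_continuity_0|].
  exact (continuity_pt_of_is_derive F u _ (off_0_is_derive u Hu)).
Qed.

Lemma off_0_mvt x y : x < y -> 0 <= x \/ y <= 0 ->
  exists c, x < c < y /\ F y - F x = dF c * (y - x).
Proof.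
  intros Hxy Hside; apply mvt_interior; auto.
  - intros u _; apply off_0_continuity.
  - intros u Hu; apply off_0_is_derive; lra.
Qed.

Lemma off_0_strict_increasing :
  (forall v, v <> 0 -> 0 < dF v) -> strict_increasing F.
Proof.
  intros Hpos.
  assert (Hhalf : forall x y, x < y -> 0 <= x \/ y <= 0 -> F x < F y).
  { intros x y Hxy Hside; apply (lt_of_derive_pos F dF); auto.
    - intros u _; apply off_0_continuity.
    - intros u Hu; apply off_0_is_derive; lra.
    - intros u Hu; apply Hpos; lra. }
  intros x y Hxy.
  destruct (Rle_or_lt 0 x); [apply Hhalf; auto|].
  destruct (Rle_or_lt y 0); [apply Hhalf; auto|].
  apply Rlt_trans with (F 0); apply Hhalf; lra.
Qed.

Section Convexity.

Hypothesis ddF_nonneg : forall v, v <> 0 -> 0 <= ddF v.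

Lemma off_0_derive_monotone x y : x <= y -> 0 < x \/ y < 0 -> dF x <= dF y.
Proof.
  intros Hxy Hside; apply (le_of_derive_nonneg dF ddF); auto.
  - intros u Hu; apply (continuity_pt_of_is_derive dF u (ddF u)), dF_derive; lra.
  - intros u Hu; apply dF_derive; lra.
  - intros u Hu; apply ddF_nonneg; lra.
Qed.

Lemma off_0_tangent_below z y : 0 < z /\ 0 <= y \/ z < 0 /\ y <= 0 ->
  F z + dF z * (y - z) <= F y.
Proof.
  intro Hside.
  destruct (Rtotal_order z y) as [Hzy|[<-|Hyz]].
  - destruct (off_0_mvt z y Hzy) as [c [Hc E]]; [lra|].
    assert (dF z <= dF c) by (apply off_0_derive_monotone; lra).
    nra.
  - lra.
  - destruct (off_0_mvt y z Hyz) as [c [Hc E]]; [lra|].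
    assert (dF c <= dF z) by (apply off_0_derive_monotone; lra).
    nra.
Qed.

(* For [y] on the far side of [0] from [z], the support at [0] bounds [F y]
   from below and dominates the tangent at [z], since [m] lies between the
   slopes of [F] on the two sides of [0]. *)
Lemma off_0_convex m : (forall y, F 0 + m * y <= F y) -> convex F.
Proof.
  intro Hsupp0; apply convex_of_supporting_lines; intro z.
  destruct (Req_dec z 0) as [->|Hz].
  { exists m; intro y; rewrite Rminus_0_r; apply Hsupp0. }
  exists (dF z); intro y.
  destruct (Rle_or_lt 0 (z * y)) as [Hzy|Hzy].
  { apply off_0_tangent_below; destruct (Rlt_or_le 0 z); [left|right]; nra. }
  pose proof (Hsupp0 z); pose proof (Hsupp0 y).
  destruct (Rlt_or_le 0 z) as [Hpos|Hnonpos].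
  - pose proof (off_0_tangent_below z 0 (or_introl (conj Hpos (Rle_refl 0)))).
    assert (m <= dF z) by nra.
    assert (y < 0) by nra.
    nra.
  - assert (Hneg : z < 0) by lra.
    pose proof (off_0_tangent_below z 0 (or_intror (conj Hneg (Rle_refl 0)))).
    assert (dF z <= m) by nra.
    assert (0 < y) by nra.
    nra.
Qed.

End Convexity.
End SmoothOffZero.

Lemma div_nonneg_of_mul_nonneg a b : 0 <= a * b -> 0 <= a / b.
Proof.
  intro H; destruct (Req_dec b 0) as [->|Hb].
  - unfold Rdiv; rewrite Rinv_0; lra.
  - replace (a / b) with (a * b * (/ b) ^ 2) by (field; exact Hb).
    apply Rmult_le_pos; [exact H | apply pow2_ge_0].
Qed.

Lemma div_pos_of_mul_pos a b : 0 < a * b -> 0 < a / b.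
Proof.
  intro H; assert (Hb : b <> 0) by (intros ->; lra).
  replace (a / b) with (a * b * (/ b) ^ 2) by (field; exact Hb).
  assert (0 < (/ b) ^ 2) by (pose proof (Rinv_neq_0_compat b Hb); nra).
  nra.
Qed.

Lemma mul_nonneg_of_same_sign a b y : 0 <= a * y -> 0 < b * y -> 0 <= a * b.
Proof. intros Ha Hb; assert (y <> 0) by (intros ->; lra); nra. Qed.

Lemma sign_of_increasing (g : R -> R) y : increasing g -> g 0 = 0 -> 0 <= g y * y.
Proof.
  intros Hg Hg0; destruct (Rle_or_lt 0 y) as [Hy|Hy].
  - pose proof (Hg 0 y Hy); nra.
  - pose proof (Hg y 0 (Rlt_le _ _ Hy)); nra.
Qed.

Lemma exp_sub1_sign y : y <> 0 -> 0 < (exp y - 1) * y.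
Proof.
  intro Hy; destruct (Rlt_or_le 0 y) as [Hpos|Hnonpos].
  - pose proof (exp_ineq1 y Hy); nra.
  - assert (Hlt : exp y < exp 0) by (apply exp_increasing; lra).
    rewrite exp_0 in Hlt; nra.
Qed.

Lemma exp_sub1_neq_0 y : y <> 0 -> exp y - 1 <> 0.
Proof. intros Hy E; pose proof (exp_sub1_sign y Hy) as Hs; rewrite E in Hs; lra. Qed.

Lemma exp_taylor2_sign y : 0 <= (exp y - 1 - y - y ^ 2 / 2) * y.
Proof.
  apply (sign_of_increasing (fun s => exp s - 1 - s - s ^ 2 / 2)).
  - apply (increasing_of_derive_nonneg _ (fun s => exp s - 1 - s)).
    + intro u; auto_derive; [exact I | field].
    + intro u; pose proof (exp_ineq1_le u); lra.
  - rewrite exp_0; field.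
Qed.

Lemma exp_quadratic_sign y : 0 <= (exp y * (y ^ 2 - 2 * y + 2) - 2) * y.
Proof.
  apply (sign_of_increasing (fun s => exp s * (s ^ 2 - 2 * s + 2) - 2)).
  - apply (increasing_of_derive_nonneg _ (fun s => exp s * s ^ 2)).
    + intro u; auto_derive; [exact I | ring].
    + intro u; pose proof (exp_pos u); pose proof (pow2_ge_0 u); nra.
  - rewrite exp_0; ring.
Qed.

Lemma exp_pade_sign y : 0 <= ((y - 2) * exp y + y + 2) * y.
Proof.
  apply (sign_of_increasing (fun s => (s - 2) * exp s + s + 2)).
  - apply (increasing_of_derive_nonneg _ (fun s => 1 - (1 - s) * exp s)).
    + intro u; auto_derive; [exact I | ring].
    + intro u; pose proof (exp_ineq1_le (- u)); pose proof (exp_pos u).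
      assert (exp u * exp (- u) = 1) by (rewrite <- exp_plus, Rplus_opp_r; apply exp_0).
      nra.
  - rewrite exp_0; ring.
Qed.

Definition exp_chord_slope y := (exp y - 1) / y.
Definition exp_chord_slope' y := (y * exp y - exp y + 1) / y ^ 2.
Definition exp_chord_slope'' y := (exp y * (y ^ 2 - 2 * y + 2) - 2) / y ^ 3.

Definition exp_slope y := if Req_EM_T y 0 then 1 else exp_chord_slope y.

Lemma exp_slope_0 : exp_slope 0 = 1.
Proof. unfold exp_slope; destruct (Req_EM_T 0 0); [reflexivity | contradiction]. Qed.

Lemma exp_slope_off_0 y : y <> 0 -> exp_slope y = exp_chord_slope y.
Proof. intro Hy; unfold exp_slope; destruct (Req_EM_T y 0); [contradiction | reflexivity]. Qed.

Lemma exp_chord_slope_derive y : y <> 0 ->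
  is_derive exp_chord_slope y (exp_chord_slope' y).
Proof.
  intro Hy; unfold exp_chord_slope, exp_chord_slope'.
  auto_derive; [exact Hy | field; exact Hy].
Qed.

Lemma exp_chord_slope'_derive y : y <> 0 ->
  is_derive exp_chord_slope' y (exp_chord_slope'' y).
Proof.
  intro Hy; unfold exp_chord_slope', exp_chord_slope''; auto_derive.
  - rewrite Rmult_1_r; apply Rmult_integral_contrapositive_currified; exact Hy.
  - field; exact Hy.
Qed.

Lemma exp_chord_slope'_pos y : y <> 0 -> 0 < exp_chord_slope' y.
Proof.
  intro Hy; apply Rdiv_lt_0_compat; [|apply pow2_gt_0; exact Hy].
  pose proof (exp_ineq1 (- y) ltac:(lra)); pose proof (exp_pos y).
  assert (exp y * exp (- y) = 1) by (rewrite <- exp_plus, Rplus_opp_r; apply exp_0).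
  nra.
Qed.

Lemma exp_chord_slope''_nonneg y : y <> 0 -> 0 <= exp_chord_slope'' y.
Proof.
  intro Hy; apply div_nonneg_of_mul_nonneg, (mul_nonneg_of_same_sign _ _ y).
  - apply exp_quadratic_sign.
  - replace (y ^ 3 * y) with ((y ^ 2) ^ 2) by ring.
    apply pow2_gt_0, pow_nonzero, Hy.
Qed.

Lemma exp_slope_continuity_0 : continuity_pt exp_slope 0.
Proof.
  intros eps Heps; destruct (derivable_pt_lim_exp_0 eps Heps) as [del Hdel].
  exists del; split; [apply cond_pos|]; intros x [[_ Hx] Hxd].
  simpl in *; unfold R_dist in *; rewrite Rminus_0_r in Hxd.
  rewrite exp_slope_off_0 by auto; rewrite exp_slope_0.
  specialize (Hdel x (not_eq_sym Hx) Hxd); rewrite Rplus_0_l, exp_0 in Hdel; exact Hdel.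
Qed.

Lemma exp_slope_pos y : 0 < exp_slope y.
Proof.
  destruct (Req_dec y 0) as [->|Hy]; [rewrite exp_slope_0; lra|].
  rewrite exp_slope_off_0 by exact Hy.
  apply div_pos_of_mul_pos, exp_sub1_sign, Hy.
Qed.

Lemma exp_slope_supporting_line_0 y : exp_slope 0 + / 2 * y <= exp_slope y.
Proof.
  rewrite exp_slope_0; destruct (Req_dec y 0) as [->|Hy]; [rewrite exp_slope_0; lra|].
  rewrite exp_slope_off_0 by exact Hy.
  assert (0 <= (exp y - 1 - y - y ^ 2 / 2) / y)
    by apply div_nonneg_of_mul_nonneg, exp_taylor2_sign.
  replace (exp_chord_slope y) with (1 + / 2 * y + (exp y - 1 - y - y ^ 2 / 2) / y)
    by (unfold exp_chord_slope; field; exact Hy).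
  lra.
Qed.

Lemma exp_slope_strict_increasing : strict_increasing exp_slope.
Proof.
  exact (off_0_strict_increasing _ _ _ exp_slope_continuity_0 exp_slope_off_0
           exp_chord_slope_derive exp_chord_slope'_pos).
Qed.

Lemma exp_slope_convex : convex exp_slope.
Proof.
  exact (off_0_convex _ _ _ _ exp_slope_continuity_0 exp_slope_off_0 exp_chord_slope_derive
           exp_chord_slope'_derive exp_chord_slope''_nonneg _ exp_slope_supporting_line_0).
Qed.

Definition exp_div_slope y := exp y / exp_slope y.

Definition exp_div_chord_slope y := y * exp y / (exp y - 1).
Definition exp_div_chord_slope' y := exp y * (exp y - 1 - y) / (exp y - 1) ^ 2.
Definition exp_div_chord_slope'' y :=
  exp y * ((y - 2) * exp y + y + 2) / (exp y - 1) ^ 3.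

Lemma exp_div_slope_off_0 y : y <> 0 -> exp_div_slope y = exp_div_chord_slope y.
Proof.
  intro Hy; pose proof (exp_sub1_neq_0 y Hy).
  unfold exp_div_slope, exp_div_chord_slope; rewrite exp_slope_off_0 by exact Hy.
  unfold exp_chord_slope; field; auto.
Qed.

Lemma exp_div_chord_slope_derive y : y <> 0 ->
  is_derive exp_div_chord_slope y (exp_div_chord_slope' y).
Proof.
  intro Hy; pose proof (exp_sub1_neq_0 y Hy) as He.
  unfold exp_div_chord_slope, exp_div_chord_slope'.
  auto_derive; [exact He | field; exact He].
Qed.

Lemma exp_div_chord_slope'_derive y : y <> 0 ->
  is_derive exp_div_chord_slope' y (exp_div_chord_slope'' y).
Proof.
  intro Hy; pose proof (exp_sub1_neq_0 y Hy) as He.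
  unfold exp_div_chord_slope', exp_div_chord_slope''; auto_derive.
  - rewrite Rmult_1_r; apply Rmult_integral_contrapositive_currified; exact He.
  - field; exact He.
Qed.

Lemma exp_div_chord_slope'_pos y : y <> 0 -> 0 < exp_div_chord_slope' y.
Proof.
  intro Hy; apply Rdiv_lt_0_compat; [|apply pow2_gt_0, exp_sub1_neq_0, Hy].
  pose proof (exp_ineq1 y Hy); pose proof (exp_pos y); nra.
Qed.

Lemma exp_div_chord_slope''_nonneg y : y <> 0 -> 0 <= exp_div_chord_slope'' y.
Proof.
  intro Hy; apply div_nonneg_of_mul_nonneg.
  replace (exp y * ((y - 2) * exp y + y + 2) * (exp y - 1) ^ 3) with
    (exp y * (exp y - 1) ^ 2 * (((y - 2) * exp y + y + 2) * (exp y - 1))) by ring.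
  apply Rmult_le_pos.
  - apply Rmult_le_pos; [apply Rlt_le, exp_pos | apply pow2_ge_0].
  - apply (mul_nonneg_of_same_sign _ _ y); [apply exp_pade_sign | apply exp_sub1_sign, Hy].
Qed.

Lemma exp_div_slope_continuity_0 : continuity_pt exp_div_slope 0.
Proof.
  apply (continuity_pt_div exp exp_slope).
  - apply derivable_continuous_pt, derivable_pt_exp.
  - exact exp_slope_continuity_0.
  - rewrite exp_slope_0; lra.
Qed.

Lemma exp_div_slope_pos y : 0 < exp_div_slope y.
Proof. apply Rdiv_lt_0_compat; [apply exp_pos | apply exp_slope_pos]. Qed.

Lemma exp_div_slope_supporting_line_0 y : exp_div_slope 0 + / 2 * y <= exp_div_slope y.
Proof.
  replace (exp_div_slope 0) with 1
    by (unfold exp_div_slope; rewrite exp_slope_0, exp_0; field).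
  destruct (Req_dec y 0) as [->|Hy].
  { unfold exp_div_slope; rewrite exp_slope_0, exp_0; lra. }
  rewrite exp_div_slope_off_0 by exact Hy.
  pose proof (exp_sub1_neq_0 y Hy).
  assert (0 <= ((y - 2) * exp y + y + 2) / (2 * (exp y - 1))).
  { apply div_nonneg_of_mul_nonneg.
    pose proof (mul_nonneg_of_same_sign _ _ y (exp_pade_sign y) (exp_sub1_sign y Hy)).
    nra. }
  replace (exp_div_chord_slope y) with
    (1 + / 2 * y + ((y - 2) * exp y + y + 2) / (2 * (exp y - 1)))
    by (unfold exp_div_chord_slope; field; auto).
  lra.
Qed.

Lemma exp_div_slope_strict_increasing : strict_increasing exp_div_slope.
Proof.
  exact (off_0_strict_increasing _ _ _ exp_div_slope_continuity_0 exp_div_slope_off_0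
           exp_div_chord_slope_derive exp_div_chord_slope'_pos).
Qed.

Lemma exp_div_slope_convex : convex exp_div_slope.
Proof.
  exact (off_0_convex _ _ _ _ exp_div_slope_continuity_0 exp_div_slope_off_0
           exp_div_chord_slope_derive exp_div_chord_slope'_derive
           exp_div_chord_slope''_nonneg _ exp_div_slope_supporting_line_0).
Qed.

Lemma exp_slope_product_strictly_convex r p q : 0 <= r -> 0 < p -> 0 < q ->
  strictly_convex (fun x => exp (r * x) * exp_slope (p * x) * exp_div_slope (q * x)).
Proof.
  intros Hr Hp Hq.
  assert (HS : strict_increasing (fun x => exp_slope (p * x)))
    by exact (strict_increasing_comp_scale _ _ Hp exp_slope_strict_increasing).
  apply strictly_convex_mul.
  - intro x; apply Rmult_lt_0_compat; [apply exp_pos | apply exp_slope_pos].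
  - intro x; apply exp_div_slope_pos.
  - apply strict_increasing_mul; [intro; apply exp_pos | intro; apply exp_slope_pos | |];
      [apply exp_scale_increasing, Hr | exact HS].
  - exact (strict_increasing_comp_scale _ _ Hq exp_div_slope_strict_increasing).
  - apply convex_mul; [intro; apply exp_pos | intro; apply exp_slope_pos | | | |].
    + apply exp_scale_increasing, Hr.
    + apply increasing_of_strict_increasing, HS.
    + apply exp_scale_convex.
    + exact (convex_comp_scale _ _ Hp exp_slope_convex).
  - exact (convex_comp_scale _ _ Hq exp_div_slope_convex).
Qed.

Lemma f_abcd_factor a b c d x : 0 < a -> 0 < b -> 0 < c -> 0 < d ->
  ln b < ln a -> ln d < ln c ->
  f_abcd a b c d x =
    (ln a - ln b) / (ln c - ln d) *
    (exp ((ln b - ln c) * x) * exp_slope ((ln a - ln b) * x)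
       * exp_div_slope ((ln c - ln d) * x)).
Proof.
  intros Ha Hb Hc Hd Hab Hcd.
  unfold f_abcd; destruct (Req_EM_T x 0) as [->|Hx].
  { rewrite !Rmult_0_r, exp_0, exp_slope_0; unfold exp_div_slope.
    rewrite exp_slope_0, exp_0, !ln_div by assumption; field; lra. }
  set (p := ln a - ln b); set (q := ln c - ln d); set (r := ln b - ln c).
  assert (Hp : p <> 0) by (unfold p; lra); assert (Hq : q <> 0) by (unfold q; lra).
  assert (Hpx : p * x <> 0) by (apply Rmult_integral_contrapositive_currified; auto).
  assert (Hqx : q * x <> 0) by (apply Rmult_integral_contrapositive_currified; auto).
  rewrite exp_slope_off_0, exp_div_slope_off_0 by assumption.
  unfold exp_chord_slope, exp_div_chord_slope, Rpower.
  assert (Hexp : forall u v, exp u = exp v * exp (u - v))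
    by (intros u v; rewrite <- exp_plus; f_equal; ring).
  rewrite (Hexp (x * ln a) (x * ln b)), (Hexp (x * ln b) (x * ln c)),
    (Hexp (x * ln c) (x * ln d)).
  replace (x * ln a - x * ln b) with (p * x) by (unfold p; ring).
  replace (x * ln b - x * ln c) with (r * x) by (unfold r; ring).
  replace (x * ln c - x * ln d) with (q * x) by (unfold q; ring).
  pose proof (exp_sub1_neq_0 _ Hqx) as Hq1.
  replace (exp (x * ln d) * exp (q * x) - exp (x * ln d))
    with (exp (x * ln d) * (exp (q * x) - 1)) by ring.
  pose proof (exp_pos (x * ln d)).
  field; repeat split; auto; lra.
Qed.

Theorem theorem2p2 (a b c d : R) :
  a > b -> b >= c -> c > d -> d > 0 ->
  strictly_convex (f_abcd a b c d).
Proof.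
  intros Hab Hbc Hcd Hd.
  assert (Hlab : ln b < ln a) by (apply ln_increasing; lra).
  assert (Hlcd : ln d < ln c) by (apply ln_increasing; lra).
  assert (Hlbc : ln c <= ln b) by (apply ln_le; lra).
  pose proof (exp_slope_product_strictly_convex (ln b - ln c) (ln a - ln b) (ln c - ln d)
                ltac:(lra) ltac:(lra) ltac:(lra)) as Hconv.
  assert (Hcoef : 0 < (ln a - ln b) / (ln c - ln d)) by (apply Rdiv_lt_0_compat; lra).
  intros x y t Hxy Ht.
  rewrite !(f_abcd_factor a b c d) by (assumption || lra).
  pose proof (Rmult_lt_compat_l _ _ _ Hcoef (Hconv x y t Hxy Ht)).
  lra.
Qed.
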